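(* Let $\underline{s}=(s_1,\dots,s_d)\in\mathbb{R}_+^d$ with $s_{i+1}\le s_i$ for all $i$, and let $\underline{t},\underline{\bar s},\underline{\bar t}\in\mathbb{R}_+^d$ be likewise non-increasingly ordered. Then the pair $(\underline{s},\underline{t})$ equals the pair $(\underline{\bar s},\underline{\bar t})$ up to reordering, i.e. $(\underline s,\underline t)=(\underline{\bar s},\underline{\bar t})$ or $(\underline s,\underline t)=(\underline{\bar t},\underline{\bar s})$, if and only if both of the following hold: 1. $e_i(\underline s)+e_i(\underline t)=e_i(\underline{\bar s})+e_i(\underline{\bar t})$ for all $i=1,\dots,d$; 2. $\sum_{i+j=k,\;0\le i,j\le d}e_i(\underline s)e_j(\underline t)=\sum_{i+j=k,\;0\le i,j\le d}e_i(\underline{\bar s})e_j(\underline{\bar t})$ for all $k=1,\dots,2d$.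
   Context: For a tuple $x=(x_1,\dots,x_n)$, the elementary symmetric polynomial of degree $k$ is $e_k(x)=\sum_{i_1<i_2<\cdots<i_k}x_{i_1}\cdots x_{i_k}$ for $1\le k\le n$, with $e_0(x)=1$ and $e_k(x)=0$ for $k>n$. *)

From HB Require Import structures.
From mathcomp Require Import all_boot all_order all_algebra.
From mathcomp Require Export reals.
Set Implicit Arguments. Unset Strict Implicit. Unset Printing Implicit Defensive.
Import Order.TTheory GRing.Theory Num.Theory.
Local Open Scope ring_scope.

Definition elem_sym (R : comRingType) (d : nat) (k : nat) (x : {ffun 'I_d -> R}) : R :=
  \sum_(I : {set 'I_d} | #|I| == k) \prod_(i in I) x i.

Definition nonincr_nonneg (R : realType) (d : nat) (x : {ffun 'I_d -> R}) : Prop :=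
  (forall i : 'I_d, 0 <= x i) /\
  (forall i j : 'I_d, val j = (val i).+1 -> x j <= x i).

From HB Require Import structures.
From mathcomp Require Import all_boot all_order all_algebra.
From mathcomp Require Import reals.
From mathcomp Require Import ring zify.
Set Implicit Arguments. Unset Strict Implicit. Unset Printing Implicit Defensive.
Import Order.TTheory GRing.Theory Num.Theory.
Local Open Scope ring_scope.

(* Package the e_k(x) into the generating polynomial
   E_x(z) = \sum_k e_k(x) z^k = \prod_i (1 + x_i z).  Condition 1 says
   E_s + E_t = E_sb + E_tb and condition 2 says E_s E_t = E_sb E_tb, so
   (E_sb - E_s)(E_sb - E_t) = 0 in the domain R[z], i.e.
   {E_s, E_t} = {E_sb, E_tb}.
   Finally E_x determines \prod_i (z + x_i), hence the multiset of entries of x,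
   and a sorted tuple is determined by its multiset of entries. *)

Section ElemSymPoly.
Variables (R : comNzRingType) (d : nat).
Implicit Types x y : {ffun 'I_d -> R}.

Lemma elem_sym0 x : elem_sym 0 x = 1.
Proof.
rewrite /elem_sym (big_pred1 set0) ?big_set0 // => I /=.
by rewrite cards_eq0.
Qed.

Lemma elem_sym_gt x k : (d < k)%N -> elem_sym k x = 0.
Proof.
move=> ltdk; rewrite /elem_sym big1 // => I /eqP cardI.
by have := max_card I; rewrite card_ord cardI leqNgt ltdk.
Qed.

Definition elem_sym_poly x : {poly R} := \poly_(k < d.+1) elem_sym k x.

Lemma coef_elem_sym_poly x k : (elem_sym_poly x)`_k = elem_sym k x.
Proof. by rewrite coef_poly; case: ltnP => // /elem_sym_gt ->. Qed.

Lemma coef_elem_sym_polyM x y k :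
  (elem_sym_poly x * elem_sym_poly y)`_k =
  \sum_(i < d.+1) \sum_(j < d.+1 | (i + j)%N == k) elem_sym i x * elem_sym j y.
Proof.
rewrite /elem_sym_poly !poly_def mulr_suml coef_sum; apply: eq_bigr => i _.
rewrite mulr_sumr coef_sum [RHS]big_mkcond; apply: eq_bigr => j _ /=.
rewrite -scalerAl -scalerAr scalerA -exprD coefZ coefXn eq_sym.
by case: eqP; rewrite ?mulr1 ?mulr0.
Qed.

Lemma elem_sym_poly_eqP x y :
  reflect (forall k, elem_sym k x = elem_sym k y)
          (elem_sym_poly x == elem_sym_poly y).
Proof.
apply: (iffP eqP) => [exy k | exy]; first by rewrite -!coef_elem_sym_poly exy.
by apply/polyP => k; rewrite !coef_elem_sym_poly.
Qed.

(* Expanding the product picks, for each I, x_i for i in I and 'X elsewhere. *)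
Lemma prod_XaddC_elem_sym x :
  \prod_(i < d) ('X + (x i)%:P) = \sum_(k < d.+1) elem_sym k x *: 'X^(d - k).
Proof.
under eq_bigr do rewrite addrC.
rewrite bigA_distr.
rewrite (partition_big (fun I : {set 'I_d} => inord #|I| : 'I_d.+1) xpredT) //.
apply: eq_bigr => k _; rewrite /elem_sym scaler_suml.
have card_le_d (I : {set 'I_d}) : (#|I| <= d)%N.
  by have := max_card I; rewrite card_ord.
rewrite (eq_bigl (fun I : {set 'I_d} => #|I| == k)); last first.
  by move=> I /=; rewrite -val_eqE /= inordK // ltnS card_le_d.
apply: eq_bigr => I /eqP cardI.
rewrite (bigID (mem I)) /=.
rewrite (eq_bigr (fun i => (x i)%:P)); last by move=> i ->.
rewrite [X in _ * X](eq_bigr (fun _ => 'X)); last by move=> i /negbTE ->.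
rewrite prodr_const -rmorph_prod mul_polyC; congr (_ *: 'X^_).
have -> : #|[pred i | i \notin I]| = #|~: I| by apply: eq_card => i; rewrite !inE.
by have := cardsC I; rewrite card_ord -cardI; lia.
Qed.

Lemma elem_sym_sum_eqP x y u v :
  (forall i, (0 < i)%N -> (i <= d)%N ->
     elem_sym i x + elem_sym i y = elem_sym i u + elem_sym i v) <->
  elem_sym_poly x + elem_sym_poly y = elem_sym_poly u + elem_sym_poly v.
Proof.
split=> [exy | /polyP exy i _ _]; last first.
  by have := exy i; rewrite !coefD !coef_elem_sym_poly.
apply/polyP => k; rewrite !coefD !coef_elem_sym_poly.
case: k => [|k]; first by rewrite !elem_sym0.
by case: (leqP k.+1 d) => [/exy -> // | ltdk]; rewrite !elem_sym_gt.
Qed.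

Lemma elem_sym_conv_eqP x y u v :
  (forall k, (0 < k)%N -> (k <= 2 * d)%N ->
     \sum_(i < d.+1) \sum_(j < d.+1 | (i + j)%N == k) elem_sym i x * elem_sym j y =
     \sum_(i < d.+1) \sum_(j < d.+1 | (i + j)%N == k) elem_sym i u * elem_sym j v) <->
  elem_sym_poly x * elem_sym_poly y = elem_sym_poly u * elem_sym_poly v.
Proof.
split=> [exy | /polyP exy k _ _]; last by rewrite -!coef_elem_sym_polyM exy.
apply/polyP => k; case: k => [|k].
  by rewrite !coef0M !coef_elem_sym_poly !elem_sym0.
rewrite !coef_elem_sym_polyM; case: (leqP k.+1 (2 * d)) => [/exy -> // | lt2dk].
have no_pair (i j : 'I_d.+1) : (i + j)%N != k.+1.
  by have := ltn_ord i; have := ltn_ord j; lia.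
by rewrite !big1 // => i _; rewrite big_pred0 // => j; apply/negbTE/no_pair.
Qed.

End ElemSymPoly.

Lemma elem_sym_perm_eq (F : fieldType) d (x y : {ffun 'I_d -> F}) :
  elem_sym_poly x = elem_sym_poly y -> perm_eq (codom x) (codom y).
Proof.
move=> /eqP/elem_sym_poly_eqP exy.
apply: (perm_map_inj (@oppr_inj F)); rewrite !codomE -!map_comp.
apply: prod_XsubC_eq; rewrite !big_map -[Finite.enum _]enumT !big_enum /=.
under eq_bigr do rewrite polyCN opprK.
under [RHS]eq_bigr do rewrite polyCN opprK.
rewrite !prod_XaddC_elem_sym.
by apply: eq_bigr => k _; rewrite exy.
Qed.

Lemma sorted_codom_nonincr disp (T : porderType disp) n (x : 'I_n -> T) :
  (forall i j : 'I_n, val j = (val i).+1 -> (x j <= x i)%O) ->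
  sorted >=%O (codom x).
Proof.
case: n x => [|n] x x_nonincr.
  by have /size0nil -> : size (codom x) = 0 by rewrite size_codom card_ord.
rewrite codomE.
apply/(sortedP (x ord0)) => i; rewrite size_map size_enum_ord => lt_i1_n.
have lt_i_n := ltnW lt_i1_n.
rewrite !(nth_map ord0) -?enumT ?size_enum_ord //; apply: x_nonincr.
by rewrite /= !nth_enum_ord.
Qed.

Lemma nonincr_nonneg_elem_sym_inj (R : realType) d (x y : {ffun 'I_d -> R}) :
  nonincr_nonneg x -> nonincr_nonneg y ->
  elem_sym_poly x = elem_sym_poly y -> x = y.
Proof.
move=> [_ x_nonincr] [_ y_nonincr] /elem_sym_perm_eq perm_xy.
have := sorted_eq ge_trans ge_anti (sorted_codom_nonincr x_nonincr)
  (sorted_codom_nonincr y_nonincr) perm_xy.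
rewrite !codomE => /eq_in_map eq_xy.
by apply/ffunP => i; apply: eq_xy; rewrite mem_enum.
Qed.

Lemma sum_mul_eq_cases (R : idomainType) (a b c e : R) :
  a + b = c + e -> a * b = c * e -> (a = c /\ b = e) \/ (a = e /\ b = c).
Proof.
move=> sum_eq mul_eq.
have : (c - a) * (c - b) = 0.
  have -> : (c - a) * (c - b) = c * c - c * (a + b) + a * b by ring.
  by rewrite sum_eq mul_eq; ring.
move/eqP; rewrite mulf_eq0 !subr_eq0 => /orP[/eqP ca | /eqP cb].
  by left; split=> //; apply: (addrI a); rewrite sum_eq ca.
by right; split=> //; apply: (addIr b); rewrite sum_eq cb addrC.
Qed.

Theorem theorem10 (R : realType) (d : nat) (s t sb tb : {ffun 'I_d -> R}) :
  nonincr_nonneg s -> nonincr_nonneg t ->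
  nonincr_nonneg sb -> nonincr_nonneg tb ->
  (((s = sb /\ t = tb) \/ (s = tb /\ t = sb)) <->
   ((forall i : nat, (0 < i)%N -> (i <= d)%N ->
       elem_sym i s + elem_sym i t = elem_sym i sb + elem_sym i tb) /\
    (forall k : nat, (0 < k)%N -> (k <= 2 * d)%N ->
       \sum_(i < d.+1) \sum_(j < d.+1 | (i + j)%N == k) elem_sym i s * elem_sym j t =
       \sum_(i < d.+1) \sum_(j < d.+1 | (i + j)%N == k) elem_sym i sb * elem_sym j tb))).
Proof.
move=> hs ht hsb htb; rewrite elem_sym_sum_eqP elem_sym_conv_eqP.
split=> [[[-> ->] | [-> ->]] // | [sum_eq mul_eq]]; first by rewrite addrC mulrC.
have [[es et] | [es et]] := sum_mul_eq_cases sum_eq mul_eq; [left | right];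
  by split; apply: nonincr_nonneg_elem_sym_inj.
Qed.
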